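(* Let $(A_n)_{n\in\mathbb N}$ be a sequence of invertible linear operators on $\mathbb R^d$ and $\|\cdot\|$ a norm on $\mathbb R^d$. The following are equivalent: (1) $(A_n)_{n\in\mathbb N}$ admits a nonuniform strong polynomial dichotomy; (2) there is a sequence of norms $(\|\cdot\|_n)_{n\in\mathbb N}$ on $\mathbb R^d$ such that $(A_n)_{n\in\mathbb N}$ admits a strong polynomial dichotomy with respect to $(\|\cdot\|_n)_{n\in\mathbb N}$ and there exist $C>0$, $\delta\ge0$ with $\|x\|\le\|x\|_n\le Cn^\delta\|x\|$ for all $x\in\mathbb R^d$, $n\in\mathbb N$.
   Context: $\mathbb N=\{1,2,\dots\}$. $\mathcal A(m,n)=A_{m-1}\cdots A_n$ ($m>n$), $\mathrm{Id}$ ($m=n$), $A_m^{-1}\cdots A_{n-1}^{-1}$ ($m<n$). Nonuniform strong polynomial dichotomy: there exist $K>0$, $a\ge\lambda>0$, $\varepsilon\ge0$ and projections $P_n$ with $A_nP_n=P_{n+1}A_n$ such that for all $m\ge n$ in $\mathbb N$, with $Q_m=\mathrm{Id}-P_m$: $\|\mathcal A(m,n)P_n\|\le K(m/n)^{-\lambda}n^\varepsilon$, $\|\mathcal A(n,m)Q_m\|\le K(m/n)^{-\lambda}m^\varepsilon$, $\|\mathcal A(m,n)\|\le K(m/n)^an^\varepsilon$, $\|\mathcal A(n,m)\|\le K(m/n)^am^\varepsilon$ (operator norms induced by $\|\cdot\|$). Strong polynomial dichotomy w.r.t. $(\|\cdot\|_n)$: there exist $K>0$, $a\ge\lambda>0$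 and projections $P_n$ with $A_nP_n=P_{n+1}A_n$ such that for $m\ge n$, $x\in\mathbb R^d$: $\|\mathcal A(m,n)P_nx\|_m\le K(m/n)^{-\lambda}\|x\|_n$, $\|\mathcal A(n,m)Q_mx\|_n\le K(m/n)^{-\lambda}\|x\|_m$, $\|\mathcal A(m,n)x\|_m\le K(m/n)^a\|x\|_n$, $\|\mathcal A(n,m)x\|_n\le K(m/n)^a\|x\|_m$. *)

From HB Require Import structures.
From mathcomp Require Import all_boot all_order all_algebra.
From mathcomp Require Import all_classical all_reals all_analysis.
Set Implicit Arguments. Unset Strict Implicit. Unset Printing Implicit Defensive.
Import Order.TTheory GRing.Theory Num.Theory.
Local Open Scope ring_scope.
Local Open Scope classical_set_scope.

Definition is_norm (R : realType) (d : nat) (N : 'cV[R]_d -> R) : Prop :=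
  [/\ forall x y, N (x + y) <= N x + N y,
      forall (a : R) x, N (a *: x) = `|a| * N x &
      forall x, N x = 0 -> x = 0].

Definition opnorm (R : realType) (d : nat) (N : 'cV[R]_d -> R) (M : 'M[R]_d) : R :=
  sup [set N (M *m x) | x in [set x | N x <= 1]].

(* fwd A k n = A_{n+k-1} ... A_n  (empty product = identity). *)
Fixpoint fwd (R : realType) (d : nat) (A : nat -> 'M[R]_d) (k n : nat) : 'M[R]_d :=
  match k with
  | 0 => 1%:M
  | k'.+1 => A (n + k')%N *m fwd A k' n
  end.

(* bwd A k m = A_m^{-1} ... A_{m+k-1}^{-1}. *)
Fixpoint bwd (R : realType) (d : nat) (A : nat -> 'M[R]_d) (k m : nat) : 'M[R]_d :=
  match k with
  | 0 => 1%:M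
  | k'.+1 => bwd A k' m *m invmx (A (m + k')%N)
  end.

Definition cocycle (R : realType) (d : nat) (A : nat -> 'M[R]_d) (m n : nat) : 'M[R]_d :=
  if (n <= m)%N then fwd A (m - n) n else bwd A (n - m) m.

Definition invariant_projections (R : realType) (d : nat)
    (A : nat -> 'M[R]_d) (P : nat -> 'M[R]_d) : Prop :=
  forall n, (1 <= n)%N -> P n *m P n = P n /\ A n *m P n = P n.+1 *m A n.

Definition nonuniform_strong_poly_dichotomy (R : realType) (d : nat)
    (N : 'cV[R]_d -> R) (A : nat -> 'M[R]_d) : Prop :=
  exists (K a lam eps : R) (P : nat -> 'M[R]_d),
    [/\ 0 < K, 0 < lam, lam <= a, 0 <= eps &
        invariant_projections A P] /\
        forall m n : nat, (1 <= n)%N -> (n <= m)%N ->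
          let r := (m%:R / n%:R : R) in
          [/\ opnorm N (cocycle A m n *m P n)
                <= K * powR r (- lam) * powR n%:R eps,
              opnorm N (cocycle A n m *m (1%:M - P m))
                <= K * powR r (- lam) * powR m%:R eps,
              opnorm N (cocycle A m n) <= K * powR r a * powR n%:R eps &
              opnorm N (cocycle A n m) <= K * powR r a * powR m%:R eps].

Definition strong_poly_dichotomy_wrt (R : realType) (d : nat)
    (Ns : nat -> 'cV[R]_d -> R) (A : nat -> 'M[R]_d) : Prop :=
  exists (K a lam : R) (P : nat -> 'M[R]_d),
    [/\ 0 < K, 0 < lam, lam <= a &
        invariant_projections A P] /\
        forall (m n : nat) (x : 'cV[R]_d), (1 <= n)%N -> (n <= m)%N ->
          let r := (m%:R / n%:R : R) in
          [/\ Ns m (cocycle A m n *m P n *m x) <= K * powR r (- lam) * Ns n x,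
              Ns n (cocycle A n m *m (1%:M - P m) *m x) <= K * powR r (- lam) * Ns m x,
              Ns m (cocycle A m n *m x) <= K * powR r a * Ns n x &
              Ns n (cocycle A n m *m x) <= K * powR r a * Ns m x].

From HB Require Import structures.
From mathcomp Require Import all_boot all_order all_algebra.
From mathcomp Require Import all_classical all_reals all_analysis.
From mathcomp Require Import ring lra zify.
Set Implicit Arguments. Unset Strict Implicit. Unset Printing Implicit Defensive.
Import Order.TTheory GRing.Theory Num.Theory.
Import numFieldNormedType.Exports.
Local Open Scope ring_scope.
Local Open Scope classical_set_scope.

(* The nontrivial direction constructs Lyapunov norms.  With Q_n = 1 - P_n put
     |x|_n = sup_(k >= 1) w_s(k,n) |A(k,n) P_n x|
           + sup_(k >= 1) w_u(k,n) |A(k,n) Q_n x|,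
   where, on the scale t = ln k - ln n, ln w_s is piecewise linear with slope
   lam for t > 0 and a for t < 0, and ln w_u with slopes -a and -lam.  The
   nonuniform bounds make every term at most K n^eps (1 + K n^eps) |x|, and the
   term k = n gives |x| <= |x|_n.  Since all slopes lie in [lam, a] (resp.
   [-a, -lam]), moving the base point from n to m >= n changes the weights by a
   factor between (m/n)^lam and (m/n)^a; together with A(k,m) A(m,n) = A(k,n)
   this yields the uniform dichotomy estimates with constant 1.  The converse
   just chains the norm comparison with the uniform estimates. *)

Lemma mx_normT_le (R : realDomainType) m n (M : 'M[R]_(m, n)) : `|M^T| <= `|M|.
Proof.
rewrite [leLHS]/Num.norm [leRHS]/Num.norm /= !mx_normrE.
apply/bigmax_leP; split; first by apply/bigmax_geP; left.
by move=> ij _; rewrite mxE; apply/bigmax_geP; right; exists (ij.2, ij.1).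
Qed.

Lemma mx_normT (R : realDomainType) m n (M : 'M[R]_(m, n)) : `|M^T| = `|M|.
Proof. by apply/eqP; rewrite eq_le mx_normT_le -{1}(trmxK M) mx_normT_le. Qed.

Lemma mx_norm_entry (R : realDomainType) m n (M : 'M[R]_(m, n)) i j :
  `|M i j| <= `|M|.
Proof.
rewrite [leRHS]/Num.norm /= mx_normrE.
by apply/bigmax_geP; right; exists (i, j).
Qed.

Section IsNorm.
Variables (R : realType) (d : nat) (N : 'cV[R]_d -> R).
Hypothesis hN : is_norm N.

Lemma isnormD x y : N (x + y) <= N x + N y.
Proof. by case: hN => + _ _; apply. Qed.

Lemma isnormZ (a : R) x : N (a *: x) = `|a| * N x.
Proof. by case: hN => _ + _; apply. Qed.

Lemma isnorm_eq0 x : N x = 0 -> x = 0.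
Proof. by case: hN => _ _; apply. Qed.

Lemma isnorm0 : N 0 = 0.
Proof. by rewrite -(scale0r 0) isnormZ normr0 mul0r. Qed.

Lemma isnormN x : N (- x) = N x.
Proof. by rewrite -scaleN1r isnormZ normrN normr1 mul1r. Qed.

Lemma isnorm_ge0 x : 0 <= N x.
Proof. by have := isnormD x (- x); rewrite subrr isnorm0 isnormN; lra. Qed.

Lemma isnorm_sum (I : Type) (r : seq I) (P : pred I) (F : I -> 'cV[R]_d) :
  N (\sum_(i <- r | P i) F i) <= \sum_(i <- r | P i) N (F i).
Proof.
elim/big_ind2: _ => [|x1 x2 y1 y2 h1 h2|//]; first by rewrite isnorm0.
exact: le_trans (isnormD _ _) (lerD h1 h2).
Qed.

Lemma isnorm_dist x y : `|N x - N y| <= N (x - y).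
Proof.
rewrite ler_norml; apply/andP; split.
- by have := isnormD (y - x) x; rewrite subrK -(isnormN (y - x)) opprB; lra.
- by have := isnormD (x - y) y; rewrite subrK; lra.
Qed.

Lemma isnorm_mulmx_le (M : 'M[R]_d) x :
  N (M *m x) <= (\sum_j N (col j M)) * `|x|.
Proof.
have -> : M *m x = \sum_j x j 0 *: col j M.
  apply/matrixP => i k; rewrite !mxE summxE; apply: eq_bigr => j _.
  by rewrite !mxE (ord1 k) mulrC.
rewrite mulr_suml; apply: le_trans (isnorm_sum _ _ _) _.
apply: ler_sum => j _; rewrite isnormZ mulrC ler_wpM2l ?isnorm_ge0 //.
exact: mx_norm_entry.
Qed.

Let B1 := \sum_j N (col j (1%:M : 'M[R]_d)).

Let B1_ge0 : 0 <= B1.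
Proof. by apply: sumr_ge0 => j _; exact: isnorm_ge0. Qed.

Lemma isnorm_le_mx_norm x : N x <= B1 * `|x|.
Proof. by rewrite -{1}(mul1mx x) isnorm_mulmx_le. Qed.

Lemma isnorm_trmx_continuous : continuous (fun v : 'rV[R]_d => N v^T).
Proof.
move=> v; apply/(@cvgrPdist_lt _ _ _ _ (nbhs_filter v)) => e e0.
have B1D1_gt0 : 0 < B1 + 1 by have := B1_ge0; lra.
have he : 0 < e / (B1 + 1) by rewrite divr_gt0.
apply/(@nbhs_normP R (matrix R 1 d : normedModType R)).
exists (e / (B1 + 1)) => //= t ht.
apply: le_lt_trans (isnorm_dist _ _) _; rewrite -linearB /=.
apply: le_lt_trans (isnorm_le_mx_norm _) _; rewrite mx_normT.
apply: (@le_lt_trans _ _ ((B1 + 1) * `|v - t|)); first by rewrite ler_wpM2r // lerDl.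
by rewrite mulrC -ltr_pdivlMr.
Qed.

(* [N] attains a positive minimum on the compact unit sphere of the sup norm;
   the sphere is taken in row vectors, where Heine-Borel is available. *)
Lemma isnorm_ge_mx_norm : exists2 c : R, 0 < c & forall x, c * `|x| <= N x.
Proof.
set S := [set v : 'rV[R]_d | `|v| = 1].
have S_compact : compact S.
  apply: bounded_closed_compact.
    by exists 1; split => // M M1 v; rewrite /S /= => ->; exact: ltW.
  exact: (proj1 (continuous_closedP (@Num.norm R (matrix R 1 d : normedModType R)))
    (@norm_continuous _ _) _ (@closed_eq R 1)).
have normalized_in_S x : x != 0 -> S (`|x|^-1 *: x^T).
  move=> x0; rewrite /S /= normrZ mx_normT normfV normr_id mulVf //.
  by rewrite normr_eq0.
have [S0|S0] := pselect (S !=set0); last first.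
  exists 1 => // x; have [->|x0] := eqVneq x 0.
    by rewrite normr0 mulr0 isnorm_ge0.
  by exfalso; apply: S0; exists (`|x|^-1 *: x^T); exact: normalized_in_S.
have N_continuous_on_S : {within S, continuous (fun v : 'rV[R]_d => N v^T)}.
  exact/continuous_subspaceT/isnorm_trmx_continuous.
have [u /set_mem Su u_min] := compact_EVT_min S0 S_compact N_continuous_on_S.
have Nu_gt0 : 0 < N u^T.
  rewrite lt_neqAle isnorm_ge0 andbT; apply/eqP => /esym /isnorm_eq0 /eqP.
  rewrite trmx_eq0 => /eqP u0; move: Su; rewrite /S /= u0 normr0 => /eqP.
  by rewrite eq_sym oner_eq0.
exists (N u^T) => // x; have [->|x0] := eqVneq x 0.
  by rewrite normr0 mulr0 isnorm_ge0.
have := u_min _ (mem_set (normalized_in_S _ x0)).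
rewrite linearZ /= trmxK isnormZ normfV normr_id.
by rewrite ler_pdivlMl ?normr_gt0 // mulrC.
Qed.

Lemma isnorm_mulmx_bounded (M : 'M[R]_d) :
  exists2 B, 0 <= B & forall x, N (M *m x) <= B * N x.
Proof.
have [c c0 hc] := isnorm_ge_mx_norm.
have sum_ge0 : 0 <= \sum_j N (col j M) by apply: sumr_ge0 => j _; exact: isnorm_ge0.
exists ((\sum_j N (col j M)) / c); first by rewrite divr_ge0 // ltW.
move=> x; apply: le_trans (isnorm_mulmx_le M x) _.
by rewrite -mulrA ler_wpM2l // mulrC ler_pdivlMr // mulrC.
Qed.

Lemma opnormP (M : 'M[R]_d) x : N (M *m x) <= opnorm N M * N x.
Proof.
have [B B0 hB] := isnorm_mulmx_bounded M.
have hs : has_sup [set N (M *m x) | x in [set x | N x <= 1]].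
  split; first by exists (N (M *m 0)), 0 => //=; rewrite isnorm0.
  exists B => _ [y /= y1 <-]; apply: le_trans (hB y) _.
  by rewrite -[leRHS]mulr1 ler_wpM2l.
have [x0|x0] := eqVneq (N x) 0.
  by rewrite x0 mulr0 (isnorm_eq0 x0) mulmx0 isnorm0.
have xp : 0 < N x by rewrite lt_neqAle eq_sym x0 isnorm_ge0.
have Nx_unit : N ((N x)^-1 *: x) = 1.
  by rewrite isnormZ normfV (ger0_norm (ltW xp)) mulVf.
have hy : [set N (M *m x) | x in [set x | N x <= 1]] (N (M *m ((N x)^-1 *: x))).
  by exists ((N x)^-1 *: x) => //=; rewrite Nx_unit.
have := sup_upper_bound hs hy.
rewrite -scalemxAr isnormZ normfV (ger0_norm (ltW xp)) -/(opnorm N M) => h.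
by rewrite -ler_pdivrMr // mulrC.
Qed.

Lemma opnorm_le (M : 'M[R]_d) b :
  0 <= b -> (forall x, N (M *m x) <= b * N x) -> opnorm N M <= b.
Proof.
move=> b0 hb; apply: ge_sup; first by exists (N (M *m 0)), 0 => //=; rewrite isnorm0.
move=> _ [y /= y1 <-]; apply: le_trans (hb y) _.
by rewrite -[leRHS]mulr1 ler_wpM2l.
Qed.

End IsNorm.

Section Cocycle.
Variables (R : realType) (d : nat) (A : nat -> 'M[R]_d).
Hypothesis A_unit : forall n, (1 <= n)%N -> A n \in unitmx.

Lemma fwdD j i m : fwd A (j + i) m = fwd A j (m + i) *m fwd A i m.
Proof.
elim: j => [|j IH] /=; first by rewrite mul1mx.
by rewrite IH mulmxA -addnA (addnC j i).
Qed.

Lemma fwd_unitmx j n : (1 <= n)%N -> fwd A j n \in unitmx.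
Proof.
move=> n1; elim: j => [|j IH] /=; first exact: unitmx1.
by rewrite unitmx_mul IH andbT A_unit // (leq_trans n1) ?leq_addr.
Qed.

Lemma bwdK j m : (1 <= m)%N -> bwd A j m *m fwd A j m = 1%:M.
Proof.
move=> m1; elim: j => [|j IH] /=; first by rewrite mul1mx.
rewrite -mulmxA (mulmxA (invmx _)) mulVmx ?mul1mx //.
by rewrite A_unit // (leq_trans m1) ?leq_addr.
Qed.

Definition fundmx k := fwd A k.-1 1.

Lemma fundmx_unit k : fundmx k \in unitmx.
Proof. exact: fwd_unitmx. Qed.

Lemma fundmx_split k n :
  (1 <= n)%N -> (n <= k)%N -> fundmx k = fwd A (k - n) n *m fundmx n.
Proof.
move=> n1 nk; rewrite /fundmx.
have -> : fwd A (k - n) n = fwd A (k - n) (1 + n.-1) by rewrite add1n prednK.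
by rewrite -fwdD; congr fwd; lia.
Qed.

Lemma cocycleE k n : (1 <= k)%N -> (1 <= n)%N ->
  cocycle A k n = fundmx k *m invmx (fundmx n).
Proof.
move=> k1 n1; rewrite /cocycle; case: leqP => nk.
  by rewrite (fundmx_split n1 nk) -mulmxA mulmxV ?mulmx1 // fundmx_unit.
apply: (canRL (mulmxK (fundmx_unit n))).
by rewrite (fundmx_split k1 (ltnW nk)) mulmxA bwdK // mul1mx.
Qed.

Lemma cocycleM k m n : (1 <= k)%N -> (1 <= m)%N -> (1 <= n)%N ->
  cocycle A k m *m cocycle A m n = cocycle A k n.
Proof.
move=> k1 m1 n1; rewrite !cocycleE //.
by rewrite -mulmxA (mulmxA (invmx _)) mulVmx ?mul1mx // fundmx_unit.
Qed.

Lemma cocycle_id n : cocycle A n n = 1%:M.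
Proof. by rewrite /cocycle leqnn subnn. Qed.

Variable P : nat -> 'M[R]_d.
Hypothesis P_inv : invariant_projections A P.

Lemma proj_fundmx k : (1 <= k)%N -> P k *m fundmx k = fundmx k *m P 1.
Proof.
case: k => // k _; elim: k => [|k IH]; first by rewrite /fundmx /= mul1mx mulmx1.
rewrite /fundmx /= add1n mulmxA -(proj2 (P_inv (isT : (1 <= k.+1)%N))).
by rewrite -mulmxA -/(fundmx k.+1) IH mulmxA.
Qed.

Lemma cocycle_proj k n : (1 <= k)%N -> (1 <= n)%N ->
  cocycle A k n *m P n = P k *m cocycle A k n.
Proof.
move=> k1 n1; rewrite !cocycleE //.
have -> : fundmx k *m invmx (fundmx n) *m P n
          = fundmx k *m P 1 *m invmx (fundmx n).
  rewrite -!mulmxA; congr (_ *m _); apply: (canRL (mulmxK (fundmx_unit n))).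
  by rewrite -mulmxA proj_fundmx // mulmxA mulVmx ?mul1mx // fundmx_unit.
by rewrite -proj_fundmx // mulmxA.
Qed.

Lemma cocycle_compl k n : (1 <= k)%N -> (1 <= n)%N ->
  cocycle A k n *m (1%:M - P n) = (1%:M - P k) *m cocycle A k n.
Proof.
by move=> k1 n1; rewrite mulmxBr mulmxBl mulmx1 mul1mx cocycle_proj.
Qed.

End Cocycle.

Section SupPos.
Variable R : realType.

Definition supn (f : nat -> R) : R := sup [set f k | k in [set k | (1 <= k)%N]].

Lemma supn_ub (f : nat -> R) B k :
  (forall j, (1 <= j)%N -> f j <= B) -> (1 <= k)%N -> f k <= supn f.
Proof.
move=> fB k1; apply: sup_upper_bound; last by exists k.
split; first by exists (f 1%N), 1%N.
by exists B => _ [j j1 <-]; exact: fB.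
Qed.

Lemma supn_le (f : nat -> R) B :
  (forall k, (1 <= k)%N -> f k <= B) -> supn f <= B.
Proof.
move=> fB; apply: ge_sup; first by exists (f 1%N), 1%N.
by move=> _ [j j1 <-]; exact: fB.
Qed.

Lemma supn_le_scale (f g : nat -> R) c B : 0 <= c ->
  (forall k, (1 <= k)%N -> g k <= B) ->
  (forall k, (1 <= k)%N -> f k <= c * g k) -> supn f <= c * supn g.
Proof.
move=> c0 gB fg; apply: supn_le => k k1; apply: le_trans (fg k k1) _.
by rewrite ler_wpM2l // (supn_ub gB).
Qed.

End SupPos.

Section Kink.
Variable R : realType.

Definition kink (p q t : R) : R := p * Num.max t 0 + q * Num.min t 0.

Lemma kink_ge0 p q t : 0 <= t -> kink p q t = p * t.
Proof. by move=> t0; rewrite /kink max_l // min_r // mulr0 addr0. Qed.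

Lemma kink_le0 p q t : t <= 0 -> kink p q t = q * t.
Proof. by move=> t0; rewrite /kink max_r // min_l // mulr0 add0r. Qed.

Lemma kink_slope lo hi p q t s : lo <= p <= hi -> lo <= q <= hi -> 0 <= s ->
  lo * s <= kink p q (t + s) - kink p q t <= hi * s.
Proof.
move=> /andP[lo_p p_hi] /andP[lo_q q_hi] s0.
have ts : t <= t + s by rewrite lerDl.
set u := Num.max (t + s) 0 - Num.max t 0; set v := Num.min (t + s) 0 - Num.min t 0.
have u0 : 0 <= u by rewrite subr_ge0 le_max2.
have v0 : 0 <= v by rewrite subr_ge0 le_min2.
have uv : u + v = s.
  by have := addr_max_min (t + s) 0; have := addr_max_min t 0; rewrite /u /v; lra.
have -> : kink p q (t + s) - kink p q t = p * u + q * v by rewrite /kink /u /v; ring.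
have h1 : 0 <= (p - lo) * u by apply: mulr_ge0 => //; rewrite subr_ge0.
have h2 : 0 <= (q - lo) * v by apply: mulr_ge0 => //; rewrite subr_ge0.
have h3 : 0 <= (hi - p) * u by apply: mulr_ge0 => //; rewrite subr_ge0.
have h4 : 0 <= (hi - q) * v by apply: mulr_ge0 => //; rewrite subr_ge0.
by rewrite -uv; apply/andP; split; lra.
Qed.

End Kink.

Section LogScale.
Variable R : realType.

Definition lnn (k : nat) : R := ln k%:R.

Definition pw (p : R) (m n : nat) : R := expR (p * (lnn m - lnn n)).

Definition weight (p q : R) (k n : nat) : R := expR (kink p q (lnn k - lnn n)).

Lemma lnn_le i j : (1 <= i)%N -> (i <= j)%N -> lnn i <= lnn j.
Proof.
by move=> i1 ij; rewrite /lnn ler_ln ?ler_nat // posrE ltr0n // (leq_trans i1).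
Qed.

Lemma lnn_ge0 k : (1 <= k)%N -> 0 <= lnn k.
Proof. by move=> k1; rewrite /lnn ln_ge0 // ler1n. Qed.

Lemma powR_ratio p m n : (1 <= m)%N -> (1 <= n)%N ->
  powR (m%:R / n%:R) p = pw p m n.
Proof.
move=> m1 n1; rewrite /powR ifF; last by rewrite mulf_eq0 invr_eq0 !pnatr_eq0; lia.
by rewrite lnM ?lnV // ?posrE ?invr_gt0 ?ltr0n.
Qed.

Lemma powR_nat p n : (1 <= n)%N -> powR n%:R p = expR (p * lnn n).
Proof. by move=> n1; rewrite /powR ifF // pnatr_eq0; lia. Qed.

Lemma pw_id p n : pw p n n = 1.
Proof. by rewrite /pw subrr mulr0 expR0. Qed.

Lemma pwN p m n : pw p m n * pw (- p) m n = 1.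
Proof. by rewrite /pw mulNr expRxMexpNx_1. Qed.

Lemma pw_swap p m n : pw p n m = pw (- p) m n.
Proof. by rewrite /pw -opprB mulrN mulNr. Qed.

Lemma pw_mono p p' m n : (1 <= n)%N -> (n <= m)%N -> p <= p' -> pw p m n <= pw p' m n.
Proof. by move=> n1 nm pp'; rewrite ler_expR ler_wpM2r // subr_ge0 lnn_le. Qed.

Lemma weight_ge0 p q k n : 0 <= weight p q k n.
Proof. exact: expR_ge0. Qed.

Lemma weight_ge p q k n : (1 <= n)%N -> (n <= k)%N -> weight p q k n = pw p k n.
Proof. by move=> n1 nk; rewrite /weight kink_ge0 // subr_ge0 lnn_le. Qed.

Lemma weight_le p q k n : (1 <= k)%N -> (k <= n)%N -> weight p q k n = pw q k n.
Proof. by move=> k1 kn; rewrite /weight kink_le0 // subr_le0 lnn_le. Qed.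

Lemma weight_shift lo hi p q k m n : lo <= p <= hi -> lo <= q <= hi ->
  (1 <= n)%N -> (n <= m)%N ->
  weight p q k m <= pw (- lo) m n * weight p q k n /\
  weight p q k n <= pw hi m n * weight p q k m.
Proof.
move=> hp hq n1 nm; rewrite /pw /weight -!expRD.
have -> : lnn k - lnn n = (lnn k - lnn m) + (lnn m - lnn n) by ring.
have := kink_slope (lnn k - lnn m) hp hq (_ : 0 <= lnn m - lnn n).
by rewrite subr_ge0 lnn_le // => /(_ isT) /andP[]; rewrite !ler_expR; split; lra.
Qed.

End LogScale.

Section Component.
Variables (R : realType) (d : nat) (A : nat -> 'M[R]_d) (N : 'cV[R]_d -> R).
Hypothesis A_unit : forall n, (1 <= n)%N -> A n \in unitmx.
Hypothesis hN : is_norm N.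
Variables (Pi : nat -> 'M[R]_d) (w : nat -> nat -> R) (B : nat -> R).
Hypothesis w_ge0 : forall k n, 0 <= w k n.
Hypothesis term_le : forall n x k, (1 <= n)%N -> (1 <= k)%N ->
  N (cocycle A k n *m (Pi n *m x)) * w k n <= B n * N x.

Definition component n x := supn (fun k => N (cocycle A k n *m (Pi n *m x)) * w k n).

Lemma component_ub n x k : (1 <= n)%N -> (1 <= k)%N ->
  N (cocycle A k n *m (Pi n *m x)) * w k n <= component n x.
Proof. by move=> n1; apply: supn_ub => j j1; exact: term_le. Qed.

Lemma component_ge0 n x : (1 <= n)%N -> 0 <= component n x.
Proof.
move=> n1; apply: le_trans (component_ub x n1 (isT : (1 <= 1)%N)).
by rewrite mulr_ge0 ?isnorm_ge0.
Qed.

Lemma component_le n x : (1 <= n)%N -> component n x <= B n * N x.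
Proof. by move=> n1; apply: supn_le => k k1; exact: term_le. Qed.

Lemma componentD n x y : (1 <= n)%N ->
  component n (x + y) <= component n x + component n y.
Proof.
move=> n1; apply: supn_le => k k1.
apply: le_trans (_ : _ <= (N (cocycle A k n *m (Pi n *m x))
                          + N (cocycle A k n *m (Pi n *m y))) * w k n) _.
  by rewrite ler_wpM2r // !mulmxDr isnormD.
by rewrite mulrDl lerD // component_ub.
Qed.

Lemma componentZ n (c : R) x : (1 <= n)%N ->
  component n (c *: x) <= `|c| * component n x.
Proof.
move=> n1; apply: supn_le_scale => // [k k1|k k1]; first exact: term_le.
by rewrite -!scalemxAr isnormZ // mulrA.
Qed.

Lemma component_eq0 n x : (1 <= n)%N -> Pi n *m x = 0 -> component n x = 0.
Proof.
move=> n1 Pix; apply/eqP; rewrite eq_le component_ge0 // andbT.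
by apply: supn_le => k k1; rewrite Pix mulmx0 isnorm0 // mul0r.
Qed.

Hypothesis Pi_idem : forall n, (1 <= n)%N -> Pi n *m Pi n = Pi n.
Hypothesis Pi_comm : forall k n, (1 <= k)%N -> (1 <= n)%N ->
  cocycle A k n *m Pi n = Pi k *m cocycle A k n.

Lemma component_proj n x : (1 <= n)%N -> component n (Pi n *m x) = component n x.
Proof.
move=> n1; rewrite /component; congr supn; apply/funext => k.
by rewrite (mulmxA (Pi n)) Pi_idem.
Qed.

Lemma component_cocycle m n (c : R) x : (1 <= m)%N -> (1 <= n)%N -> 0 <= c ->
  (forall k, (1 <= k)%N -> w k m <= c * w k n) ->
  component m (cocycle A m n *m x) <= c * component n x.
Proof.
move=> m1 n1 c0 wc; apply: supn_le_scale => // [k k1|k k1]; first exact: term_le.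
rewrite (mulmxA (Pi m)) -Pi_comm // -mulmxA (mulmxA (cocycle A k m)) cocycleM //.
by rewrite mulrCA ler_wpM2l ?isnorm_ge0 ?wc.
Qed.

End Component.

Definition lyapunov_dichotomy (R : realType) (d : nat)
    (N : 'cV[R]_d -> R) (A : nat -> 'M[R]_d) : Prop :=
  exists Ns : nat -> 'cV[R]_d -> R,
    (forall n, (1 <= n)%N -> is_norm (Ns n)) /\
    strong_poly_dichotomy_wrt Ns A /\
    exists (C delta : R), 0 < C /\ 0 <= delta /\
      forall (n : nat) (x : 'cV[R]_d), (1 <= n)%N ->
        N x <= Ns n x /\ Ns n x <= C * powR n%:R delta * N x.

Section LyapunovNorm.
Variables (R : realType) (d : nat) (A : nat -> 'M[R]_d) (N : 'cV[R]_d -> R).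
Hypothesis A_unit : forall n, (1 <= n)%N -> A n \in unitmx.
Hypothesis hN : is_norm N.
Variables (K a lam eps : R) (P : nat -> 'M[R]_d).
Hypotheses (K_gt0 : 0 < K) (lam_gt0 : 0 < lam) (lam_le_a : lam <= a).
Hypothesis eps_ge0 : 0 <= eps.
Hypothesis P_inv : invariant_projections A P.
Hypothesis dichotomy : forall m n : nat, (1 <= n)%N -> (n <= m)%N ->
  let r := (m%:R / n%:R : R) in
  [/\ opnorm N (cocycle A m n *m P n) <= K * powR r (- lam) * powR n%:R eps,
      opnorm N (cocycle A n m *m (1%:M - P m)) <= K * powR r (- lam) * powR m%:R eps,
      opnorm N (cocycle A m n) <= K * powR r a * powR n%:R eps &
      opnorm N (cocycle A n m) <= K * powR r a * powR m%:R eps].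

Local Notation C := (cocycle A).

Let beta n := K * expR (eps * lnn R n).
Let bnd n := beta n * (1 + beta n).

Let beta_ge0 n : 0 <= beta n.
Proof. by rewrite mulr_ge0 ?expR_ge0 // ltW. Qed.

Lemma dichotomy_pointwise m n x : (1 <= n)%N -> (n <= m)%N ->
  [/\ N (C m n *m (P n *m x)) <= beta n * pw (- lam) m n * N x,
      N (C n m *m ((1%:M - P m) *m x)) <= beta m * pw (- lam) m n * N x,
      N (C m n *m x) <= beta n * pw a m n * N x &
      N (C n m *m x) <= beta m * pw a m n * N x].
Proof.
move=> n1 nm; have m1 := leq_trans n1 nm.
have [h1 h2 h3 h4] := dichotomy n1 nm.
rewrite /= !powR_ratio ?powR_nat // in h1 h2 h3 h4.
by split; rewrite ?mulmxA; apply: le_trans (opnormP hN _ _) _;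
  rewrite ler_wpM2r ?isnorm_ge0 // /beta mulrAC.
Qed.

Let proj_le n x : (1 <= n)%N -> N (P n *m x) <= beta n * N x.
Proof.
move=> n1; have [h _ _ _] := dichotomy_pointwise x n1 (leqnn n).
by rewrite cocycle_id mul1mx pw_id mulr1 in h.
Qed.

Let compl_le n x : (1 <= n)%N -> N ((1%:M - P n) *m x) <= beta n * N x.
Proof.
move=> n1; have [_ h _ _] := dichotomy_pointwise x n1 (leqnn n).
by rewrite cocycle_id mul1mx pw_id mulr1 in h.
Qed.

Let cancel_weight y z p w n : 0 <= w ->
  y <= beta n * p * z -> p * w = 1 -> y * w <= beta n * z.
Proof.
move=> w0 yz pw1; apply: le_trans (ler_wpM2r w0 yz) _.
have -> : beta n * p * z * w = beta n * z * (p * w) by ring.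
by rewrite pw1 mulr1.
Qed.

Let beta_le_bnd n z : 0 <= z -> beta n * z <= bnd n * z.
Proof.
move=> z0; have := mulr_ge0 (mulr_ge0 (beta_ge0 n) (beta_ge0 n)) z0.
by rewrite /bnd; lra.
Qed.

Let beta2_le_bnd n z : 0 <= z -> beta n * (beta n * z) <= bnd n * z.
Proof. by move=> z0; have := mulr_ge0 (beta_ge0 n) z0; rewrite /bnd; lra. Qed.

Let wS := weight lam a.
Let wU := weight (- a) (- lam).

Lemma stable_term_le n x k : (1 <= n)%N -> (1 <= k)%N ->
  N (C k n *m (P n *m x)) * wS k n <= bnd n * N x.
Proof.
move=> n1 k1; case: (leqP n k) => [nk|kn].
  have [h _ _ _] := dichotomy_pointwise x n1 nk.
  apply: le_trans (beta_le_bnd _ (isnorm_ge0 hN x)).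
  rewrite /wS weight_ge //; apply: cancel_weight h _; first exact: expR_ge0.
  by rewrite mulrC pwN.
have [_ _ _ h] := dichotomy_pointwise (P n *m x) k1 (ltnW kn).
apply: le_trans (beta2_le_bnd _ (isnorm_ge0 hN x)).
rewrite /wS weight_le ?(ltnW kn) //; apply: le_trans (cancel_weight _ h _) _.
- exact: expR_ge0.
- by rewrite pw_swap mulrC pwN.
- by rewrite ler_wpM2l ?proj_le.
Qed.

Lemma unstable_term_le n x k : (1 <= n)%N -> (1 <= k)%N ->
  N (C k n *m ((1%:M - P n) *m x)) * wU k n <= bnd n * N x.
Proof.
move=> n1 k1; case: (leqP k n) => [kn|nk].
  have [_ h _ _] := dichotomy_pointwise x k1 kn.
  apply: le_trans (beta_le_bnd _ (isnorm_ge0 hN x)).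
  rewrite /wU weight_le //; apply: cancel_weight h _; first exact: expR_ge0.
  by rewrite pw_swap opprK pwN.
have [_ _ h _] := dichotomy_pointwise ((1%:M - P n) *m x) n1 (ltnW nk).
apply: le_trans (beta2_le_bnd _ (isnorm_ge0 hN x)).
rewrite /wU weight_ge ?(ltnW nk) //; apply: le_trans (cancel_weight _ h _) _.
- exact: expR_ge0.
- exact: pwN.
- by rewrite ler_wpM2l ?compl_le.
Qed.

Let Q n := 1%:M - P n.

Let P_idem n : (1 <= n)%N -> P n *m P n = P n.
Proof. by move=> n1; case: (P_inv n1). Qed.

Let Q_idem n : (1 <= n)%N -> Q n *m Q n = Q n.
Proof.
by move=> n1; rewrite /Q mulmxBr mulmx1 mulmxBl mul1mx P_idem // subrr subr0.
Qed.

Let PQ n (x : 'cV[R]_d) : (1 <= n)%N -> P n *m (Q n *m x) = 0.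
Proof. by move=> n1; rewrite mulmxA /Q mulmxBr mulmx1 P_idem // subrr mul0mx. Qed.

Let QP n (x : 'cV[R]_d) : (1 <= n)%N -> Q n *m (P n *m x) = 0.
Proof. by move=> n1; rewrite mulmxA /Q mulmxBl mul1mx P_idem // subrr mul0mx. Qed.

Let P_comm k n : (1 <= k)%N -> (1 <= n)%N -> C k n *m P n = P k *m C k n.
Proof. exact: cocycle_proj. Qed.

Let Q_comm k n : (1 <= k)%N -> (1 <= n)%N -> C k n *m Q n = Q k *m C k n.
Proof. exact: cocycle_compl. Qed.

Let compS := component A N P wS.
Let compU := component A N Q wU.

Definition lyapunov_norm n x := compS n x + compU n x.

Lemma lyapunov_norm_ge n x : (1 <= n)%N -> N x <= lyapunov_norm n x.
Proof.
move=> n1; have hS := component_ub stable_term_le x n1 n1.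
have hU := component_ub unstable_term_le x n1 n1.
rewrite cocycle_id !mul1mx /wS /wU !weight_ge // !pw_id !mulr1 in hS hU.
apply: le_trans (lerD hS hU); apply: le_trans _ (isnormD hN _ _).
by rewrite -mulmxDl addrC subrK mul1mx.
Qed.

Let wS_ge0 k n : 0 <= wS k n. Proof. exact: weight_ge0. Qed.
Let wU_ge0 k n : 0 <= wU k n. Proof. exact: weight_ge0. Qed.

Lemma lyapunov_norm_le n x : (1 <= n)%N -> lyapunov_norm n x <= (bnd n + bnd n) * N x.
Proof.
move=> n1; rewrite mulrDl.
by apply: lerD; apply: component_le => //;
  [exact: stable_term_le | exact: unstable_term_le].
Qed.

Lemma lyapunov_norm_ge0 n x : (1 <= n)%N -> 0 <= lyapunov_norm n x.
Proof. by move=> n1; apply: le_trans (lyapunov_norm_ge x n1); exact: isnorm_ge0. Qed.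

Lemma lyapunov_normZ n (c : R) x : (1 <= n)%N ->
  lyapunov_norm n (c *: x) <= `|c| * lyapunov_norm n x.
Proof.
move=> n1; rewrite mulrDr.
by apply: lerD; apply: componentZ => //;
  [exact: stable_term_le | exact: unstable_term_le].
Qed.

Lemma lyapunov_norm_is_norm n : (1 <= n)%N -> is_norm (lyapunov_norm n).
Proof.
move=> n1; split.
- move=> x y; rewrite /lyapunov_norm addrACA.
  by apply: lerD; apply: componentD => //;
    [exact: stable_term_le | exact: unstable_term_le].
- move=> c x; apply/eqP; rewrite eq_le lyapunov_normZ //=.
  have [->|c0] := eqVneq c 0; first by rewrite normr0 mul0r lyapunov_norm_ge0.
  rewrite -{1}(scalerK c0 x).
  apply: le_trans (ler_wpM2l (normr_ge0 c) (lyapunov_normZ _ _ n1)) _.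
  by rewrite mulrA normfV mulfV ?mul1r // normr_eq0.
- move=> x Nx0; apply: (isnorm_eq0 hN); apply/eqP; rewrite eq_le isnorm_ge0 // andbT.
  by rewrite -Nx0 lyapunov_norm_ge.
Qed.

Let lam_range : lam <= lam <= a. Proof. by rewrite lexx lam_le_a. Qed.
Let a_range : lam <= a <= a. Proof. by rewrite lexx lam_le_a. Qed.
Let Na_range : - a <= - a <= - lam. Proof. by rewrite lexx lerN2 lam_le_a. Qed.
Let Nlam_range : - a <= - lam <= - lam. Proof. by rewrite lexx lerN2 lam_le_a. Qed.

Let pwNlam_le_pwa m n : (1 <= n)%N -> (n <= m)%N -> pw (- lam) m n <= pw a m n.
Proof.
move=> n1 nm; apply: pw_mono n1 nm (le_trans _ lam_le_a).
by rewrite -subr_ge0 opprK addr_ge0 // ltW.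
Qed.

Let lyapunov_norm_cocycle m n cS cU x :
  (1 <= m)%N -> (1 <= n)%N -> 0 <= cS -> 0 <= cU ->
  (forall k, (1 <= k)%N -> wS k m <= cS * wS k n) ->
  (forall k, (1 <= k)%N -> wU k m <= cU * wU k n) ->
  lyapunov_norm m (C m n *m x) <= cS * compS n x + cU * compU n x.
Proof.
move=> m1 n1 cS0 cU0 hS hU; apply: lerD.
- exact: (component_cocycle A_unit hN stable_term_le P_comm).
- exact: (component_cocycle A_unit hN unstable_term_le Q_comm).
Qed.

Lemma lyapunov_norm_stable m n x : (1 <= n)%N -> (n <= m)%N ->
  lyapunov_norm m (C m n *m P n *m x) <= pw (- lam) m n * lyapunov_norm n x.
Proof.
move=> n1 nm; have m1 := leq_trans n1 nm; rewrite -mulmxA.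
apply: le_trans (lyapunov_norm_cocycle (cS := pw (- lam) m n) (cU := pw a m n)
  _ m1 n1 _ _ _ _) _.
- exact: expR_ge0.
- exact: expR_ge0.
- by move=> k _; have [] := weight_shift k lam_range a_range n1 nm.
- by move=> k _; have [] := weight_shift k Na_range Nlam_range n1 nm; rewrite opprK.
rewrite /compS /compU (component_proj A N wS P_idem) //.
rewrite (component_eq0 hN wU_ge0 unstable_term_le n1 (QP x n1)) mulr0 addr0.
by rewrite ler_wpM2l ?expR_ge0 // lerDl (component_ge0 hN wU_ge0 unstable_term_le).
Qed.

Lemma lyapunov_norm_unstable m n x : (1 <= n)%N -> (n <= m)%N ->
  lyapunov_norm n (C n m *m (1%:M - P m) *m x) <= pw (- lam) m n * lyapunov_norm m x.
Proof.
move=> n1 nm; have m1 := leq_trans n1 nm; rewrite -mulmxA.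
apply: le_trans (lyapunov_norm_cocycle (cS := pw a m n) (cU := pw (- lam) m n)
  _ n1 m1 _ _ _ _) _.
- exact: expR_ge0.
- exact: expR_ge0.
- by move=> k _; have [] := weight_shift k lam_range a_range n1 nm.
- by move=> k _; have [] := weight_shift k Na_range Nlam_range n1 nm.
rewrite /compS /compU (component_proj A N wU Q_idem) //.
rewrite (component_eq0 hN wS_ge0 stable_term_le m1 (PQ x m1)) mulr0 add0r.
by rewrite ler_wpM2l ?expR_ge0 // lerDr (component_ge0 hN wS_ge0 stable_term_le).
Qed.

Lemma lyapunov_norm_growth m n x : (1 <= n)%N -> (n <= m)%N ->
  lyapunov_norm m (C m n *m x) <= pw a m n * lyapunov_norm n x.
Proof.
move=> n1 nm; have m1 := leq_trans n1 nm; rewrite /lyapunov_norm mulrDr.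
apply: lyapunov_norm_cocycle => // [||k _|k _]; rewrite ?expR_ge0 //.
  have [+ _] := weight_shift k lam_range a_range n1 nm.
  by move/le_trans; apply; rewrite ler_wpM2r ?wS_ge0 ?pwNlam_le_pwa.
by have [] := weight_shift k Na_range Nlam_range n1 nm; rewrite opprK.
Qed.

Lemma lyapunov_norm_growth_backward m n x : (1 <= n)%N -> (n <= m)%N ->
  lyapunov_norm n (C n m *m x) <= pw a m n * lyapunov_norm m x.
Proof.
move=> n1 nm; have m1 := leq_trans n1 nm; rewrite /lyapunov_norm mulrDr.
apply: lyapunov_norm_cocycle => // [||k _|k _]; rewrite ?expR_ge0 //.
  by have [] := weight_shift k lam_range a_range n1 nm.
have [_ +] := weight_shift k Na_range Nlam_range n1 nm.
by move/le_trans; apply; rewrite ler_wpM2r ?wU_ge0 ?pwNlam_le_pwa.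
Qed.

Lemma lyapunov_norm_dichotomy : strong_poly_dichotomy_wrt lyapunov_norm A.
Proof.
exists 1, a, lam, P; split; first by split.
move=> m n x n1 nm /=; have m1 := leq_trans n1 nm.
rewrite !mul1r !powR_ratio //; split.
- exact: lyapunov_norm_stable.
- exact: lyapunov_norm_unstable.
- exact: lyapunov_norm_growth.
- exact: lyapunov_norm_growth_backward.
Qed.

Lemma lyapunov_norm_bounds n x : (1 <= n)%N ->
  N x <= lyapunov_norm n x /\
  lyapunov_norm n x <= 2 * (K * (1 + K)) * powR n%:R (eps + eps) * N x.
Proof.
move=> n1; split; first exact: lyapunov_norm_ge.
apply: le_trans (lyapunov_norm_le x n1) _; rewrite ler_wpM2r ?isnorm_ge0 //.
rewrite powR_nat // (mulrDl eps eps) expRD /bnd /beta.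
set E := expR (eps * lnn R n).
have E1 : 1 <= E by apply: le_trans _ (expR_ge1Dx _); rewrite lerDl mulr_ge0 ?lnn_ge0.
have : 0 <= K * E * (E - 1).
  by rewrite !mulr_ge0 ?subr_ge0 ?(ltW K_gt0) ?(le_trans ler01 E1).
lra.
Qed.

Lemma lyapunov_dichotomy_of_nonuniform : lyapunov_dichotomy N A.
Proof.
exists lyapunov_norm; split; first exact: lyapunov_norm_is_norm.
split; first exact: lyapunov_norm_dichotomy.
exists (2 * (K * (1 + K))), (eps + eps); split; last split.
- by rewrite !mulr_gt0 // addr_gt0.
- exact: addr_ge0.
- by move=> n x; exact: lyapunov_norm_bounds.
Qed.

End LyapunovNorm.

Lemma nonuniform_dichotomy_of_lyapunov (R : realType) (d : nat)
    (A : nat -> 'M[R]_d) (N : 'cV[R]_d -> R) :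
  is_norm N -> lyapunov_dichotomy N A -> nonuniform_strong_poly_dichotomy N A.
Proof.
move=> hN [Ns [_ [[K [a [lam [P [[K_gt0 lam_gt0 lam_le_a P_inv] dich]]]]]]]].
move=> [C [delta [C_gt0 [delta_ge0 Ns_bounds]]]].
exists (K * C), a, lam, delta, P; split; first by split; rewrite ?mulr_gt0.
move=> m n n1 nm /=; have m1 := leq_trans n1 nm.
have chain u v w p q z : u <= v -> v <= K * p * w -> w <= C * q * z -> 0 <= p ->
    u <= K * C * p * q * z.
  move=> uv vw wz p0; apply: le_trans uv (le_trans vw _).
  have -> : K * C * p * q * z = K * p * (C * q * z) by ring.
  by rewrite ler_wpM2l // mulr_ge0 // ltW.
split; apply: (opnorm_le hN); rewrite ?mulr_ge0 ?powR_ge0 ?ltW // => x;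
  have [h1 h2 h3 h4] := dich m n x n1 nm.
- exact: chain (proj1 (Ns_bounds m _ m1)) h1 (proj2 (Ns_bounds n x n1)) (powR_ge0 _ _).
- exact: chain (proj1 (Ns_bounds n _ n1)) h2 (proj2 (Ns_bounds m x m1)) (powR_ge0 _ _).
- exact: chain (proj1 (Ns_bounds m _ m1)) h3 (proj2 (Ns_bounds n x n1)) (powR_ge0 _ _).
- exact: chain (proj1 (Ns_bounds n _ n1)) h4 (proj2 (Ns_bounds m x m1)) (powR_ge0 _ _).
Qed.

Theorem proposition2p1 (R : realType) (d : nat) (A : nat -> 'M[R]_d)
    (N : 'cV[R]_d -> R) :
  (forall n, (1 <= n)%N -> A n \in unitmx) ->
  is_norm N ->
  nonuniform_strong_poly_dichotomy N A <->
  exists Ns : nat -> 'cV[R]_d -> R,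
    (forall n, (1 <= n)%N -> is_norm (Ns n)) /\
    strong_poly_dichotomy_wrt Ns A /\
    exists (C delta : R), 0 < C /\ 0 <= delta /\
      forall (n : nat) (x : 'cV[R]_d), (1 <= n)%N ->
        N x <= Ns n x /\ Ns n x <= C * powR n%:R delta * N x.
Proof.
move=> A_unit hN; split; last exact: nonuniform_dichotomy_of_lyapunov.
move=> [K [a [lam [eps [P [[K_gt0 lam_gt0 lam_le_a eps_ge0 P_inv] dich]]]]]].
exact: (lyapunov_dichotomy_of_nonuniform A_unit hN K_gt0 lam_gt0 lam_le_a eps_ge0
  P_inv dich).
Qed.
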